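(* Let $E$ be a set of inequalities $t\sqsubseteq t'$ between finite partial $\Sigma$-terms in $\mathrm{FT}\,X_\omega$, let $(\Delta X)_X$ be a quasi-regular family, and let $X$ be any set. Let $F_\omega(X)$ be the free $\omega$-continuous algebra on $X$ in $\mathcal V_\omega$, and let $$R(X)=\{t^{F_\omega(X)}: t\in \Delta X\}\subseteq F_\omega(X),$$ the set of elements of $F_\omega(X)$ denoted by coterms in $\Delta X$ under the assignment $x\mapsto x$. Then: (1) $R(X)$, with the order and operations inherited from $F_\omega(X)$, is a $\Delta$-algebra belonging to $\mathcal V_r$, and it is the free $\Delta$-algebra in $\mathcal V_r$ on generators $X$: for every $\Delta$-algebra $A\in\mathcal V_r$ and every map $h:X\to A$ there is a unique morphism of $\Delta$-algebras $R(X)\to A$ extending $h$. (2) $R(X)$ is isomorphic (as a $\Delta$-algebra, by an isomorphism fixing $X$) to the completion of $F(X)$ by $\Delta$-ideals, where $F(X)$ is the free ordered algebra on $X$ in $\mathcal V$; this completion is the set of all $\Delta$-ideals of $F(X)$ ordered by inclusion, with operations $f(C_1,\dots,C_n)={\downarrow}\{f^{F(X)}(a_1,\dots,a_n): a_i\in C_i\}$ and generators $x\mapsto{\downarrow}\{x\}$.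
   Context: Fix a ranked alphabet $\Sigma$ and a countably infinite set $X_\omega$ of variables. An ordered $\Sigma$-algebra is a $\Sigma$-algebra $A$ with a partial order having a least element $\bot^A$ and monotone operations; morphisms are strict monotone maps commuting with the operations. It is $\omega$-continuous if countable directed sets have suprema and operations preserve them; morphisms of $\omega$-continuous algebras additionally preserve countable directed suprema. $\mathrm{FT}\,X$ denotes the finite partial $\Sigma$-terms over $X$ (finite trees, internal nodes labeled by symbols of $\Sigma$ of matching arity, leaves by constants or elements of $X$, some subterms possibly missing, written $\bot$) and $\mathrm{CT}\,X$ the partial coterms (finite or infinite such trees), ordered by extension; $\mathrm{CT}\,X$ is the free $\omega$-continuous algebra on $X$. Each $t\in\mathrm{FT}\,X_\omega$ induces $t^A:A^{X_\omega}\to A$ on an ordered algebra $A$, and each coterm induces a function on an $\omega$-continuous algebra. $\mathcal V$ is the class of ordered algebras $A$ with $t^A\le t'^A$ pointwise for all $(t\sqsubseteq t')\in E$; $\mathcal V_\omega$ is the class of $\omega$-continuous algebras in $\mathcal V$ (free algebras exist in both). A quasi-regular family is a family $(\Delta X)_X$ over all sets, each $\Delta X$ an ordered $\Sigma$-subalgebra of $\mathrm{CT}\,X$ containing $X$, such that every morphism $h:\mathrm{CT}\,X\to\mathrm{CT}\,Y$ of $\omega$-continuous algebras with $h(X)\subseteq\Delta Y$ satisfies $h(\Delta X)\subseteq\Delta Y$; $\Delta$ is a monad on sets ($\eta$ = one-node terms, $\mu$ = substitution/flattening, $\Delta g$ = relabeling leaves). For $t_1,t_2\in\mathrm{CT}\,X$,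 $t_1\ll t_2$ means $t_1\in\mathrm{FT}\,X$ is obtained from $t_2$ by deleting subterms. For an ordered algebra $A$ with term evaluation $\alpha:\mathrm{FT}\,A\to A$, a $\Delta$-set is a set $\{\alpha(s):s\ll t\}$ with $t\in\Delta A$, and a $\Delta$-ideal is the down-closure ${\downarrow}B=\{c:\exists b\in B,\ c\le b\}$ of a $\Delta$-set $B$. $A$ is a $\Delta$-algebra ($\Delta$-regular algebra) if every $\Delta$-set has a supremum and the operations preserve suprema of $\Delta$-sets; its structure map $\alpha:\Delta A\to A$ is $\alpha(t)=\bigvee\{\alpha(s):s\ll t\}$. A morphism of $\Delta$-algebras is a strict monotone map $h$ with $h\circ\alpha=\beta\circ\Delta h$ (equivalently, an ordered-algebra morphism preserving suprema of $\Delta$-sets). $\mathcal V_r$ is the class of $\Delta$-algebras that, as ordered algebras, belong to $\mathcal V$. *)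

From mathcomp Require Import all_boot.
Set Implicit Arguments. Unset Strict Implicit. Unset Printing Implicit Defensive.

Record signature := Signature { sym :> Type; ar : sym -> nat }.

Definition is_lub {T : Type} (le : T -> T -> Prop) (P : T -> Prop) (a : T) : Prop :=
  (forall b, P b -> le b a) /\ (forall c, (forall b, P b -> le b c) -> le a c).

Definition is_lub_in {T : Type} (dom : T -> Prop) (le : T -> T -> Prop)
  (P : T -> Prop) (a : T) : Prop :=
  dom a /\ (forall b, P b -> le b a) /\
  (forall c, dom c -> (forall b, P b -> le b c) -> le a c).

Definition countable_set {T : Type} (P : T -> Prop) : Prop :=
  exists e : nat -> T, forall x, P x -> exists n, e n = x.

Definition directed {T : Type} (le : T -> T -> Prop) (P : T -> Prop) : Prop :=
  (exists x, P x) /\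
  (forall x y, P x -> P y -> exists z, P z /\ le x z /\ le y z).

Section Sig.
Variable S : signature.

(** Finite partial terms FT X (TBot = missing subterm) *)
Inductive term (X : Type) : Type :=
| TBot
| TVar (x : X)
| TOp (f : sym S) (ts : 'I_(ar f) -> term X).

(** Partial coterms CT X: (well-formed) labellings of positions
    (paths of child indices from the root); None = no node. *)
Definition tree (X : Type) : Type := list nat -> option (X + sym S).

Definition wf_tree (X : Type) (t : tree X) : Prop :=
  forall p i, t (rcons p i) <> None ->
    exists f : sym S, t p = Some (inr f) /\ i < ar f.

Definition tree_le (X : Type) (t1 t2 : tree X) : Prop :=
  forall p, t1 p <> None -> t1 p = t2 p.

Definition tree_bot (X : Type) : tree X := fun _ => None.

Definition tree_var (X : Type) (x : X) : tree X :=
  fun p => match p with [::] => Some (inl x) | _ => None end.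

Definition tree_op (X : Type) (f : sym S) (ts : 'I_(ar f) -> tree X) : tree X :=
  fun p => match p with
           | [::] => Some (inr f)
           | i :: p' => match (insub i : option 'I_(ar f)) with
                        | Some j => ts j p'
                        | None => None
                        end
           end.

Fixpoint term_tree (X : Type) (t : term X) : tree X :=
  match t with
  | TBot => tree_bot X
  | TVar x => tree_var x
  | TOp f ts => tree_op (fun i => term_tree (ts i))
  end.

(* s << t : the finite term s is obtained from t by deleting subterms *)
Definition finite_below (X : Type) (s : term X) (t : tree X) : Prop :=
  tree_le (term_tree s) t.

Unset Implicit Arguments.
Record ordAlg := OrdAlg {
  car :> Type;
  ale : car -> car -> Prop;
  abot : car;
  aop : forall f : sym S, ('I_(ar f) -> car) -> car;
  ale_refl : forall a, ale a a;
  ale_trans : forall a b c, ale a b -> ale b c -> ale a c;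
  ale_antisym : forall a b, ale a b -> ale b a -> a = b;
  abot_least : forall a, ale abot a;
  aop_mono : forall f u v, (forall i, ale (u i) (v i)) -> ale (aop f u) (aop f v)
}.

Set Implicit Arguments.
Arguments ale {A} : rename.
Arguments abot A : rename.
Arguments aop {A} f u : rename.

Fixpoint eval (A : ordAlg) (X : Type) (v : X -> A) (t : term X) : A :=
  match t with
  | TBot => abot A
  | TVar x => v x
  | TOp f ts => aop f (fun i => eval v (ts i))
  end.

Definition ord_morph (A B : ordAlg) (h : A -> B) : Prop :=
  h (abot A) = abot B /\
  (forall a b, ale a b -> ale (h a) (h b)) /\
  (forall f u, h (aop f u) = aop f (fun i => h (u i))).

Definition omega_cont (A : ordAlg) : Prop :=
  (forall D : A -> Prop, countable_set D -> directed (@ale A) D ->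
     exists a, is_lub (@ale A) D a) /\
  (forall (f : sym S) (D : ('I_(ar f) -> A) -> Prop) (s : 'I_(ar f) -> A),
     countable_set D -> directed (fun u v => forall i, ale (u i) (v i)) D ->
     (forall i, is_lub (@ale A) (fun a => exists u, D u /\ a = u i) (s i)) ->
     is_lub (@ale A) (fun a => exists u, D u /\ a = aop f u) (aop f s)).

Definition omega_morph (A B : ordAlg) (h : A -> B) : Prop :=
  ord_morph h /\
  (forall D : A -> Prop, countable_set D -> directed (@ale A) D ->
     forall a, is_lub (@ale A) D a ->
       is_lub (@ale B) (fun b => exists a', D a' /\ b = h a') (h a)).

Definition ct_eval (A : ordAlg) (X : Type) (v : X -> A) (t : tree X) (a : A) : Prop :=
  is_lub (@ale A) (fun b => exists s, finite_below s t /\ b = eval v s) a.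

(** Varieties given by inequalities over X_omega = nat *)
Definition ineqs := term nat -> term nat -> Prop.

Definition sat (E : ineqs) (A : ordAlg) : Prop :=
  forall t t', E t t' -> forall v : nat -> A, ale (eval v t) (eval v t').

Definition free_ord (E : ineqs) (X : Type) (F : ordAlg) (eta : X -> F) : Prop :=
  sat E F /\
  forall (B : ordAlg), sat E B -> forall h : X -> B,
    exists g : F -> B, ord_morph g /\ (forall x, g (eta x) = h x) /\
      (forall g' : F -> B, ord_morph g' -> (forall x, g' (eta x) = h x) ->
         forall a, g' a = g a).

Definition free_omega (E : ineqs) (X : Type) (F : ordAlg) (eta : X -> F) : Prop :=
  omega_cont F /\ sat E F /\
  forall (B : ordAlg), omega_cont B -> sat E B -> forall h : X -> B,
    exists g : F -> B, omega_morph g /\ (forall x, g (eta x) = h x) /\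
      (forall g' : F -> B, omega_morph g' -> (forall x, g' (eta x) = h x) ->
         forall a, g' a = g a).

Definition ct_omega_morph (X Y : Type) (h : tree X -> tree Y) : Prop :=
  (forall t, wf_tree t -> wf_tree (h t)) /\
  h (tree_bot X) = tree_bot Y /\
  (forall t t', wf_tree t -> wf_tree t' -> tree_le t t' -> tree_le (h t) (h t')) /\
  (forall f (ts : 'I_(ar f) -> tree X), (forall i, wf_tree (ts i)) ->
     h (tree_op ts) = tree_op (fun i => h (ts i))) /\
  (forall D : tree X -> Prop, (forall t, D t -> wf_tree t) ->
     countable_set D -> directed (@tree_le X) D ->
     forall t, is_lub_in (@wf_tree X) (@tree_le X) D t ->
       is_lub_in (@wf_tree Y) (@tree_le Y) (fun u => exists t', D t' /\ u = h t') (h t)).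

Definition tfamily := forall X : Type, tree X -> Prop.

Definition quasi_regular (Delta : tfamily) : Prop :=
  (forall X t, Delta X t -> wf_tree t) /\
  (forall X, Delta X (tree_bot X)) /\
  (forall X (x : X), Delta X (tree_var x)) /\
  (forall X f (ts : 'I_(ar f) -> tree X), (forall i, Delta X (ts i)) ->
     Delta X (tree_op ts)) /\
  (forall X Y (h : tree X -> tree Y), ct_omega_morph h ->
     (forall x, Delta Y (h (tree_var x))) ->
     forall t, Delta X t -> Delta Y (h t)).

Definition delta_set (A : ordAlg) (t : tree A) (a : A) : Prop :=
  exists s, finite_below s t /\ a = eval (fun b : A => b) s.

Definition delta_ideal (Delta : tfamily) (A : ordAlg) (C : A -> Prop) : Prop :=
  exists t, Delta A t /\
    forall c, C c <-> exists b, delta_set t b /\ ale c b.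

Definition delta_alg (Delta : tfamily) (A : ordAlg) : Prop :=
  (forall t, Delta A t -> exists a, is_lub (@ale A) (delta_set t) a) /\
  (forall f (ts : 'I_(ar f) -> tree A) (s : 'I_(ar f) -> A),
     (forall i, Delta A (ts i)) ->
     (forall i, is_lub (@ale A) (delta_set (ts i)) (s i)) ->
     is_lub (@ale A)
       (fun a => exists u, (forall i, delta_set (ts i) (u i)) /\ a = aop f u)
       (aop f s)).

Definition delta_morph (Delta : tfamily) (A B : ordAlg) (h : A -> B) : Prop :=
  ord_morph h /\
  (forall t, Delta A t -> forall a, is_lub (@ale A) (delta_set t) a ->
     is_lub (@ale B) (fun b => exists a', delta_set t a' /\ b = h a') (h a)).

End Sig.

Arguments ale {S A} : rename.
Arguments abot {S} A : rename.
Arguments aop {S A} f u : rename.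

From mathcomp Require Import all_boot.
From Stdlib Require Import Classical ClassicalEpsilon.
From Stdlib Require Import FunctionalExtensionality PropExtensionality ProofIrrelevance.
Set Implicit Arguments. Unset Strict Implicit. Unset Printing Implicit Defensive.

(* Every coterm is the supremum of the countable chain of its truncations, so coterms
   have values in any omega-continuous algebra; substituting coterms for the leaves of
   a coterm is an omega-continuous morphism of coterm algebras, under which a
   quasi-regular family is stable. Hence R(X) is closed under the operations, and the
   supremum of a Delta-set of R(X) is the value of the flattened Delta-coterm.
   The key fact is compactness. The ideal completion of F(X) is an omega-continuous
   algebra in V, and the omega-continuous extension of x |-> down(x) sends the value
   of a coterm t to the ideal generated by the values in F(X) of the finite
   approximations of t. So if t1 is below t2 in F_omega(X), every finite approximation
   of t1 is below some finite approximation of t2 in F(X), hence, along F(X) -> B, in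
   any Delta-algebra B of V_r. The supremum in B of the approximations of a
   Delta-coterm is therefore a monotone function of its value in F_omega(X), which
   gives the unique extension R(X) -> B; and a in R(X) corresponds to the Delta-ideal
   of F(X) generated by the finite approximations of any coterm denoting a. *)

Lemma directed_fin_ub T (le : T -> T -> Prop) (P : T -> Prop) n (w : 'I_n -> T) :
  (forall a b c, le a b -> le b c -> le a c) -> directed le P ->
  (forall i, P (w i)) -> exists c, P c /\ forall i, le (w i) c.
Proof.
move=> le_trans [[c0 Pc0] dirP] Pw.
suff [c [Pc ubc]] : exists c, P c /\ forall i, i \in enum 'I_n -> le (w i) c.
  by exists c; split=> // i; apply: ubc; rewrite mem_enum.
elim: (enum 'I_n) => [|j l [c [Pc ubc]]]; first by exists c0.
have [d [Pd [le_wd le_cd]]] := dirP _ _ (Pw j) Pc.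
exists d; split=> // i; rewrite in_cons => /predU1P [->|/ubc le_wc] //.
exact: le_trans le_wc le_cd.
Qed.

Lemma fin_up_bound n (Q : 'I_n -> nat -> Prop) :
  (forall i k k', Q i k -> k <= k' -> Q i k') ->
  (forall i, exists k, Q i k) -> exists K, forall i, Q i K.
Proof.
move=> Q_up /choice [k Qk].
have dir_nat : directed leq (fun _ => True).
  by split=> [|a b _ _]; [exists 0|exists (maxn a b); rewrite leq_maxl leq_maxr].
have [K [_ leK]] := directed_fin_ub (fun a b c => @leq_trans b a c) dir_nat (w := k) (fun=> I).
by exists K => i; apply: Q_up (Qk i) (leK i).
Qed.

Section FiniteApproximation.
Variable S : signature.
Implicit Types (A : ordAlg S) (Y : Type).

Definition subtree Y (t : tree S Y) (i : nat) : tree S Y := fun p => t (i :: p).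

Lemma tree_le_refl Y (t : tree S Y) : tree_le t t.
Proof. by []. Qed.

Lemma tree_le_trans Y (t1 t2 t3 : tree S Y) :
  tree_le t1 t2 -> tree_le t2 t3 -> tree_le t1 t3.
Proof. by move=> le12 le23 p t1p; rewrite le12 // le23 // -le12. Qed.

Lemma subtree_op Y f (ts : 'I_(ar f) -> tree S Y) (i : 'I_(ar f)) :
  subtree (tree_op ts) i = ts i.
Proof. by apply: functional_extensionality => p; rewrite /subtree /= valK. Qed.

Lemma wf_subtree Y (t : tree S Y) i : wf_tree t -> wf_tree (subtree t i).
Proof. by move=> wft p; apply: (wft (i :: p)). Qed.

Lemma below_bot Y (t : tree S Y) : finite_below (TBot S Y) t.
Proof. by []. Qed.

Lemma below_varE Y (x : Y) (t : tree S Y) :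
  finite_below (TVar S x) t <-> t [::] = Some (inl x).
Proof. by split=> [<-|tx [|i p]] //=; rewrite tx. Qed.

Lemma below_opE Y f (ss : 'I_(ar f) -> term S Y) (t : tree S Y) :
  finite_below (TOp ss) t <->
  t [::] = Some (inr f) /\ forall i, finite_below (ss i) (subtree t i).
Proof.
split=> [below|[tf below] [|k p] /=]; last first.
- by case: insubP => [j _ <-|] // /below.
- by rewrite tf.
split=> [|i p ssp]; first by rewrite -below.
by rewrite /subtree -below /= ?valK.
Qed.

Lemma below_term_tree Y (s : term S Y) : finite_below s (term_tree s).
Proof. exact: tree_le_refl. Qed.

Lemma eval_below A Y (v : Y -> A) (s1 s2 : term S Y) :
  finite_below s1 (term_tree s2) -> ale (eval v s1) (eval v s2).
Proof.
elim: s1 s2 => [|x|f ss IH] s2; first by move=> _; apply: abot_least.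
  by move/below_varE; case: s2 => //= y [->]; apply: ale_refl.
move/below_opE; case: s2 => [|y|g ts] /= [] // [ef]; subst g => below.
by apply: aop_mono => i; apply: IH; move: (below i); rewrite subtree_op.
Qed.

Fixpoint truncate Y (k : nat) (t : tree S Y) : term S Y :=
  match k with
  | 0 => TBot S Y
  | k'.+1 => match t [::] with
             | Some (inl y) => TVar S y
             | Some (inr f) => TOp (fun i : 'I_(ar f) => truncate k' (subtree t i))
             | None => TBot S Y
             end
  end.

Lemma truncate_below Y k (t : tree S Y) : finite_below (truncate k t) t.
Proof.
elim: k t => [|k IH] t //=.
case tE: (t [::]) => [[y|f]|] //; first exact/below_varE.
by apply/below_opE.
Qed.

Lemma truncate_mono Y k k' (t : tree S Y) : k <= k' ->
  finite_below (truncate k t) (term_tree (truncate k' t)).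
Proof.
elim: k k' t => [|k IH] [|k'] t // lekk' /=; first exact: below_bot.
case: (t [::]) => [[y|f]|] //.
by apply/below_opE; split=> // i; rewrite subtree_op; apply: IH.
Qed.

Lemma below_truncate Y (s : term S Y) (t : tree S Y) : finite_below s t ->
  exists k, forall k', k <= k' -> finite_below s (term_tree (truncate k' t)).
Proof.
elim: s t => [|x|f ss IH] t; first by move=> _; exists 0 => *.
  by move/below_varE => tx; exists 1 => -[|k'] //= _; rewrite tx; apply/below_varE.
move/below_opE => [tf below].
pose deep i k := forall k', k <= k' ->
  finite_below (ss i) (term_tree (truncate k' (subtree t i))).
have [K deepK] : exists K, forall i, deep i K.
  apply: fin_up_bound => [i k k1 deepk lek k2 lek2|i]; last exact: IH.
  exact/deepk/(leq_trans lek).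
exists K.+1 => -[|k'] //= leK; rewrite tf; apply/below_opE; split=> // i.
by rewrite subtree_op; apply: deepK.
Qed.

Lemma is_lub_unique A (P : A -> Prop) a b : is_lub ale P a -> is_lub ale P b -> a = b.
Proof.
by move=> [ubPa leastA] [ubPb leastB]; apply: ale_antisym; [apply: leastA|apply: leastB].
Qed.

Lemma is_lub_same_ub A (P Q : A -> Prop) a :
  (forall c, (forall b, P b -> ale b c) <-> (forall b, Q b -> ale b c)) ->
  is_lub ale P a -> is_lub ale Q a.
Proof. by move=> sameub [ubPa leastA]; split=> [|c /sameub]; [apply/sameub|apply: leastA]. Qed.

Lemma is_lub_eq A (P Q : A -> Prop) a : (forall b, P b <-> Q b) ->
  is_lub ale P a -> is_lub ale Q a.
Proof. by move=> PQ; apply: is_lub_same_ub => c; split=> ubc b /PQ /ubc. Qed.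

Lemma is_lub_cofinal A (P Q : A -> Prop) a :
  (forall b, P b -> exists2 b', Q b' & ale b b') ->
  (forall b, Q b -> exists2 b', P b' & ale b b') ->
  is_lub ale P a -> is_lub ale Q a.
Proof.
move=> PQ QP; apply: is_lub_same_ub => c.
by split=> ubc b; [move/QP|move/PQ] => -[b' /ubc le_b'c le_bb']; apply: ale_trans le_bb' le_b'c.
Qed.

Definition approx A Y (v : Y -> A) (t : tree S Y) (a : A) : Prop :=
  exists s, finite_below s t /\ a = eval v s.

Definition truncations A Y (v : Y -> A) (t : tree S Y) (b : A) : Prop :=
  exists k, b = eval v (truncate k t).

Lemma is_lub_approx_truncations A Y (v : Y -> A) t a :
  is_lub ale (approx v t) a <-> is_lub ale (truncations v t) a.
Proof.
have approx_trunc b : approx v t b -> exists2 b', truncations v t b' & ale b b'.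
  move=> [s [/below_truncate [k deep] ->]].
  by exists (eval v (truncate k t)); [exists k|apply/eval_below/deep].
have trunc_approx b : truncations v t b -> exists2 b', approx v t b' & ale b b'.
  move=> [k ->]; exists (eval v (truncate k t)); last exact: ale_refl.
  by exists (truncate k t); split; [apply: truncate_below|].
by split; apply: is_lub_cofinal.
Qed.

Lemma truncations_countable A Y (v : Y -> A) t : countable_set (truncations v t).
Proof. by exists (fun k => eval v (truncate k t)) => _ [k ->]; exists k. Qed.

Lemma truncations_directed A Y (v : Y -> A) t : directed ale (truncations v t).
Proof.
split=> [|_ _ [k ->] [k' ->]]; first by exists (eval v (truncate 0 t)), 0.
exists (eval v (truncate (maxn k k') t)); split; first by exists (maxn k k').
by split; apply/eval_below/truncate_mono; rewrite ?leq_maxl ?leq_maxr.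
Qed.

Lemma omega_cont_approx_lub A Y (v : Y -> A) t :
  omega_cont A -> exists a, is_lub ale (approx v t) a.
Proof.
move=> [dir_lub _].
have [a lub_a] := dir_lub _ (truncations_countable v t) (truncations_directed v t).
by exists a; apply/is_lub_approx_truncations.
Qed.

Definition op_set A f (P : 'I_(ar f) -> A -> Prop) (a : A) : Prop :=
  exists u, (forall i, P i (u i)) /\ a = aop f u.

Lemma approx_opE A Y (v : Y -> A) f (ts : 'I_(ar f) -> tree S Y) a :
  approx v (tree_op ts) a <-> a = abot A \/ op_set (fun i => approx v (ts i)) a.
Proof.
split=> [[[|x|g ss] [+ ->]]|[->|[u [/choice [ss approx_u] ->]]]]; first by left.
- by move/below_varE.
- move/below_opE => [[ef]]; subst g => below; right.
  exists (fun i => eval v (ss i)); split=> // i.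
  by exists (ss i); split=> //; rewrite -(subtree_op ts).
- by exists (TBot S Y); split; first exact: below_bot.
exists (TOp ss); split.
  by apply/below_opE; split=> // i; rewrite subtree_op; case: (approx_u i).
by congr aop; apply: functional_extensionality => i; case: (approx_u i).
Qed.

Lemma is_lub_approx_op A Y (v : Y -> A) f (ts : 'I_(ar f) -> tree S Y) a :
  is_lub ale (approx v (tree_op ts)) a <->
  is_lub ale (op_set (fun i => approx v (ts i))) a.
Proof.
suff sameub c : (forall b, approx v (tree_op ts) b -> ale b c) <->
                (forall b, op_set (fun i => approx v (ts i)) b -> ale b c).
  by split; apply: is_lub_same_ub => // c'; rewrite sameub.
split=> ubc b; first by move=> opb; apply/ubc/approx_opE; right.
by case/approx_opE=> [->|/ubc]; first exact: abot_least.
Qed.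

Lemma approx_botE A Y (v : Y -> A) b : approx v (tree_bot S Y) b <-> b = abot A.
Proof.
split=> [[[|x|g ss] [+ ->]]|->] //; last by exists (TBot S Y); split; first exact: below_bot.
- by move/below_varE.
- by move/below_opE => [].
Qed.

Lemma is_lub_approx_bot A Y (v : Y -> A) : is_lub ale (approx v (tree_bot S Y)) (abot A).
Proof.
by split=> [_ /approx_botE ->|c _]; [apply: ale_refl|apply: abot_least].
Qed.

Lemma approx_varE A Y (v : Y -> A) y b :
  approx v (tree_var S y) b <-> b = abot A \/ b = v y.
Proof.
split=> [[[|x|g ss] [+ ->]]|[->|->]]; first by left.
- by move/below_varE => [->]; right.
- by move/below_opE => [].
- by exists (TBot S Y); split; first exact: below_bot.
by exists (TVar S y); split=> //; apply/below_varE.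
Qed.

Lemma is_lub_approx_var A Y (v : Y -> A) y : is_lub ale (approx v (tree_var S y)) (v y).
Proof.
split=> [_ /approx_varE [->|->]|c ubc]; [exact: abot_least|exact: ale_refl|].
by apply/ubc/approx_varE; right.
Qed.

(* Continuity of [aop f] along the countable directed family of truncation
   vectors, which are cofinal among the vectors of finite approximations. *)
Lemma omega_cont_approx_op A Y (v : Y -> A) f (ts : 'I_(ar f) -> tree S Y) s :
  omega_cont A -> (forall i, is_lub ale (approx v (ts i)) (s i)) ->
  is_lub ale (op_set (fun i => approx v (ts i))) (aop f s).
Proof.
move=> [_ op_cont] lub_s.
pose trunc_vec k i := eval v (truncate k (ts i)).
pose D u := exists k, u = trunc_vec k.
have countD : countable_set D by exists trunc_vec => _ [k ->]; exists k.
have dirD : directed (fun u u' => forall i, ale (u i) (u' i)) D.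
  split=> [|_ _ [k ->] [k' ->]]; first by exists (trunc_vec 0), 0.
  exists (trunc_vec (maxn k k')); split; first by exists (maxn k k').
  by split=> i; apply/eval_below/truncate_mono; rewrite ?leq_maxl ?leq_maxr.
have lub_proj i : is_lub ale (fun a => exists u, D u /\ a = u i) (s i).
  apply: is_lub_eq (proj1 (is_lub_approx_truncations _ _ _) (lub_s i)) => b.
  by split=> [[k ->]|[_ [[k ->] ->]]]; [exists (trunc_vec k); split; first exists k|exists k].
apply: is_lub_cofinal (op_cont f D s countD dirD lub_proj).
  move=> _ [_ [[k ->] ->]]; exists (aop f (trunc_vec k)); last exact: ale_refl.
  exists (trunc_vec k); split=> // i.
  by exists (truncate k (ts i)); split; first exact: truncate_below.
move=> _ [u [/choice [ss approx_u] ->]].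
have [K deepK] : exists K, forall i, finite_below (ss i) (term_tree (truncate K (ts i))).
  apply: fin_up_bound => [i k k' below lek|i].
    by apply: tree_le_trans below _; apply: truncate_mono.
  by have [k deep] := below_truncate (proj1 (approx_u i)); exists k; apply: deep.
exists (aop f (trunc_vec K)); first by exists (trunc_vec K); split=> //; exists K.
by apply: aop_mono => i; case: (approx_u i) => _ ->; apply/eval_below/deepK.
Qed.

End FiniteApproximation.

Section Substitution.
Variable S : signature.
Implicit Types (A : ordAlg S) (Y Z : Type).

(* [subst_tree sg t] replaces every leaf [y] of [t] by the coterm [sg y]. *)
Fixpoint subst_tree Y Z (sg : Y -> tree S Z) (t : tree S Y) (p : seq nat) {struct p}
  : option (Z + sym S) :=
  match t [::] with
  | Some (inl y) => sg y p
  | Some (inr f) => if p is i :: p' then subst_tree sg (subtree t i) p' else Some (inr f)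
  | None => None
  end.

Lemma subst_tree_leaf Y Z (sg : Y -> tree S Z) t y :
  t [::] = Some (inl y) -> subst_tree sg t = sg y.
Proof. by move=> ty; apply: functional_extensionality => -[|i p] /=; rewrite ty. Qed.

Lemma subst_subtree Y Z (sg : Y -> tree S Z) t f i : t [::] = Some (inr f) ->
  subtree (subst_tree sg t) i = subst_tree sg (subtree t i).
Proof. by move=> tf; apply: functional_extensionality => p; rewrite /subtree /= tf. Qed.

Lemma subst_tree_var Y Z (sg : Y -> tree S Z) y : subst_tree sg (tree_var S y) = sg y.
Proof. exact: subst_tree_leaf. Qed.

Lemma subst_tree_bot Y Z (sg : Y -> tree S Z) : subst_tree sg (tree_bot S Y) = tree_bot S Z.
Proof. by apply: functional_extensionality => -[|i p]. Qed.

Lemma subst_tree_op Y Z (sg : Y -> tree S Z) f (ts : 'I_(ar f) -> tree S Y) :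
  subst_tree sg (tree_op ts) = tree_op (fun i => subst_tree sg (ts i)).
Proof.
apply: functional_extensionality => -[|k p] //=.
case: insubP => [j _ <-|kN]; first by rewrite -(subtree_op ts).
have -> : subtree (tree_op ts) k = tree_bot S Y.
  by apply: functional_extensionality => q; rewrite /subtree /= insubN.
by rewrite subst_tree_bot.
Qed.

Lemma subst_tree_mono Y Z (sg : Y -> tree S Z) t t' :
  tree_le t t' -> tree_le (subst_tree sg t) (subst_tree sg t').
Proof.
move=> le_tt' p; elim: p t t' le_tt' => [|i p IH] t t' le_tt' /=;
  case tE: (t [::]) => [[y|f]|] //; rewrite -le_tt' ?tE //.
by move=> ?; apply: IH => // q; apply: le_tt'.
Qed.

Lemma wf_subst_tree Y Z (sg : Y -> tree S Z) t :
  (forall y, wf_tree (sg y)) -> wf_tree t -> wf_tree (subst_tree sg t).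
Proof.
move=> wf_sg wft p; elim: p t wft => [|k p IH] t wft i /=;
  case tE: (t [::]) => [[y|f]|] //.
- exact: (wf_sg y [::] i).
- move=> ti; exists f; split=> //.
  have [g [tg lti]] : exists g, t [::] = Some (inr g) /\ i < ar g.
    by apply: (wft [::] i); move: ti; rewrite /subtree /=; case: (t [:: i]).
  by move: tg lti; rewrite tE => -[->].
- exact: (wf_sg y (k :: p) i).
- exact/IH/wf_subtree.
Qed.

Lemma prefix_rconsE (T : eqType) (p q : seq T) i :
  prefix p (rcons q i) = (p == rcons q i) || prefix p q.
Proof.
elim: p q => [|j p IH] [|k q] //=.
- by case: p {IH} => [|x p] /=; rewrite eqseq_cons ?andbT ?andbF ?orbF.
- by rewrite IH eqseq_cons; case: (j == k).
Qed.

Lemma wf_tree_prefix Y (t : tree S Y) p q :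
  wf_tree t -> t q <> None -> prefix p q -> t p <> None.
Proof.
move=> wft; elim/last_ind: q p => [|q i IH] p; first by case: p.
move=> tqi; rewrite prefix_rconsE => /orP [/eqP -> //|]; apply: IH.
by have [g [-> _]] := wft q i tqi.
Qed.

Lemma is_lub_in_node Y (D : tree S Y -> Prop) t p :
  (forall d, D d -> wf_tree d) -> is_lub_in (@wf_tree S Y) (@tree_le S Y) D t ->
  t p <> None -> exists2 d, D d & d p = t p.
Proof.
move=> wfD [wft [ubt leastt]] tp; apply: NNPP => nodeN.
(* Otherwise [t] cut off at [p] is a smaller upper bound of [D]. *)
pose t' q := if prefix p q then None else t q.
have wft' : wf_tree t'.
  move=> q i; rewrite /t' prefix_rconsE; case: (prefix p q); first by rewrite orbT.
  by case: (p == rcons q i) => //= /wft.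
have ubt' d : D d -> tree_le d t'.
  move=> Dd q dq; rewrite /t'; case pq: (prefix p q); last exact: ubt.
  by case: nodeN; exists d => //; apply/ubt/(wf_tree_prefix (wfD d Dd) dq pq).
by have := leastt t' wft' ubt' p tp; rewrite /t' prefix_refl.
Qed.

Lemma is_lub_in_agree Y (D : tree S Y -> Prop) t p :
  (forall d, D d -> wf_tree d) -> directed (@tree_le S Y) D ->
  is_lub_in (@wf_tree S Y) (@tree_le S Y) D t ->
  exists2 d, D d & forall q, prefix q p -> t q <> None -> d q = t q.
Proof.
move=> wfD [[d0 Dd0] dirD] lub_t.
have agree_up d d' q : tree_le d d' -> (t q <> None -> d q = t q) -> t q <> None -> d' q = t q.
  by move=> le_dd' dq tq; rewrite -le_dd' ?dq.
elim/last_ind: p => [|p i [d Dd agree_d]].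
  case t0: (t [::]) => [a|]; last by exists d0 => // -[].
  have [|d Dd dt] := is_lub_in_node wfD lub_t (_ : t [::] <> None); first by rewrite t0.
  by exists d => // -[].
case tpi: (t (rcons p i)) => [a|]; last first.
  exists d => // q; rewrite prefix_rconsE => /orP [/eqP ->|]; [by rewrite tpi|exact: agree_d].
have [|d' Dd' d't] := is_lub_in_node wfD lub_t (_ : t (rcons p i) <> None).
  by rewrite tpi.
have [d'' [Dd'' [le_dd'' le_d'd'']]] := dirD d d' Dd Dd'.
exists d'' => // q; rewrite prefix_rconsE => /orP [/eqP ->|pq].
  by apply: agree_up le_d'd'' _ => _.
exact: agree_up le_dd'' (agree_d q pq).
Qed.

Lemma subst_tree_agree Y Z (sg : Y -> tree S Z) p t d :
  (forall q, prefix q p -> t q <> None -> d q = t q) ->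
  subst_tree sg t p <> None -> subst_tree sg d p = subst_tree sg t p.
Proof.
elim: p t d => [|i p IH] t d agree /=;
  case tE: (t [::]) => [[y|f]|] // node; rewrite agree ?tE //.
by apply: IH node => q qp; apply: (agree (i :: q)); rewrite /= eqxx.
Qed.

Lemma subst_tree_lub Y Z (sg : Y -> tree S Z) (D : tree S Y -> Prop) t :
  (forall y, wf_tree (sg y)) -> (forall d, D d -> wf_tree d) ->
  directed (@tree_le S Y) D -> is_lub_in (@wf_tree S Y) (@tree_le S Y) D t ->
  is_lub_in (@wf_tree S Z) (@tree_le S Z)
    (fun u => exists t', D t' /\ u = subst_tree sg t') (subst_tree sg t).
Proof.
move=> wf_sg wfD dirD lub_t; have [wft [ubt _]] := lub_t.
split; first exact: wf_subst_tree.
split=> [_ [t' [Dt' ->]]|c wfc ubc p node]; first exact/subst_tree_mono/ubt.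
have [d Dd agree] := is_lub_in_agree p wfD dirD lub_t.
by rewrite -(subst_tree_agree agree node) ubc ?(subst_tree_agree agree node) //; exists d.
Qed.

Lemma subst_tree_ct_omega_morph Y Z (sg : Y -> tree S Z) :
  (forall y, wf_tree (sg y)) -> ct_omega_morph (subst_tree sg).
Proof.
move=> wf_sg; split; first by move=> t; apply: wf_subst_tree.
split; first exact: subst_tree_bot.
split; first by move=> t t' _ _; apply: subst_tree_mono.
split; first by move=> f ts _; apply: subst_tree_op.
by move=> D wfD _ dirD t; apply: subst_tree_lub.
Qed.

Lemma quasi_regular_subst (Delta : tfamily S) Y Z (sg : Y -> tree S Z) t :
  quasi_regular Delta -> (forall y, Delta Z (sg y)) -> Delta Y t ->
  Delta Z (subst_tree sg t).
Proof.
move=> [wfDelta [_ [_ [_ Delta_morph]]]] Delta_sg Delta_t; apply: Delta_morph Delta_t.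
  by apply: subst_tree_ct_omega_morph => y; apply: wfDelta.
by move=> y; rewrite subst_tree_var.
Qed.

Lemma quasi_regular_term (Delta : tfamily S) Y (s : term S Y) :
  quasi_regular Delta -> Delta Y (term_tree s).
Proof.
move=> [_ [Delta_bot [Delta_var [Delta_op _]]]].
by elim: s => [|x|f ss IH] /=; [apply: Delta_bot|apply: Delta_var|apply: Delta_op].
Qed.

Fixpoint subst_term Y Z (rho : Y -> term S Z) (s : term S Y) : term S Z :=
  match s with
  | TBot => TBot S Z
  | TVar y => rho y
  | TOp f ss => TOp (fun i => subst_term rho (ss i))
  end.

Lemma eval_subst_term A Y Z (v : Z -> A) (rho : Y -> term S Z) s :
  eval v (subst_term rho s) = eval (fun y => eval v (rho y)) s.
Proof.
elim: s => [|x|f ss IH] //=.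
by congr aop; apply: functional_extensionality => i; apply: IH.
Qed.

Lemma below_subst Y Z (rho : Y -> term S Z) (sg : Y -> tree S Z) s t :
  (forall y, finite_below (rho y) (sg y)) -> finite_below s t ->
  finite_below (subst_term rho s) (subst_tree sg t).
Proof.
move=> below_rho; elim: s t => [|x|f ss IH] t; first by move=> _; apply: below_bot.
  by move/below_varE => tx; rewrite (subst_tree_leaf _ tx); apply: below_rho.
move/below_opE => [tf below]; apply/below_opE; split; first by rewrite /= tf.
by move=> i; rewrite (subst_subtree _ _ tf); apply: IH.
Qed.

Lemma eval_morph A (B : ordAlg S) (h : A -> B) Y (v : Y -> A) s : ord_morph h ->
  h (eval v s) = eval (fun y => h (v y)) s.
Proof.
move=> [h_bot [_ h_op]]; elim: s => [|x|f ss IH] //=; rewrite h_op.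
by congr aop; apply: functional_extensionality => i; apply: IH.
Qed.

Lemma eval_mono A Y (v v' : Y -> A) s :
  (forall y, ale (v y) (v' y)) -> ale (eval v s) (eval v' s).
Proof.
move=> le_vv'; elim: s => [|x|f ss IH] /=; [exact: ale_refl|exact: le_vv'|].
exact: aop_mono.
Qed.

Definition relabel Y Z (h : Y -> Z) : tree S Y -> tree S Z :=
  subst_tree (fun y => tree_var S (h y)).

Lemma approx_relabel A Y Z (h : Y -> Z) (v : Z -> A) t b :
  approx v (relabel h t) b <-> approx (fun y => v (h y)) t b.
Proof.
split=> [[s' [+ ->]]|[s [below ->]]]; last first.
  exists (subst_term (fun y => TVar S (h y)) s); rewrite eval_subst_term.
  by split=> //; apply: below_subst below => y; apply/below_varE.
elim: s' t => [|z|g ss IH] t below.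
- by exists (TBot S Y); split; first exact: below_bot.
- move/below_varE: below; rewrite /relabel /=.
  case tE: (t [::]) => [[y|f]|] //= [<-].
  by exists (TVar S y); split; first exact/below_varE.
- move/below_opE: below => [+ below]; rewrite /relabel /=.
  case tE: (t [::]) => [[y|f]|] //= [ef]; subst g.
  have /choice [ss' approx_ss] : forall i : 'I_(ar f), exists s, finite_below s (subtree t i) /\
      eval v (ss i) = eval (fun y => v (h y)) s.
    by move=> i; apply: IH; move: (below i); rewrite (subst_subtree _ _ tE).
  exists (TOp ss'); split; first by apply/below_opE; split=> // i; case: (approx_ss i).
  by congr aop; apply: functional_extensionality => i; case: (approx_ss i).
Qed.

Lemma approx_subst_below A Y Z (v : Z -> A) (sg : Y -> tree S Z) (w : Y -> A) :
  (forall y b, approx v (sg y) b -> ale b (w y)) ->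
  forall s' t, finite_below s' (subst_tree sg t) ->
  exists2 s, finite_below s t & ale (eval v s') (eval w s).
Proof.
move=> ub_w; elim=> [|z|g ss IH] t below.
- by exists (TBot S Y); [apply: below_bot|apply: abot_least].
- case tE: (t [::]) below => [[y|f]|] /below_varE /=; rewrite tE // => sgz.
  exists (TVar S y); first exact/below_varE.
  by apply: ub_w; exists (TVar S z); split=> //; apply/below_varE.
case tE: (t [::]) => [[y|f]|].
- exists (TVar S y); first exact/below_varE.
  by apply: ub_w; exists (TOp ss); split=> //; rewrite -(subst_tree_leaf sg tE).
- move/below_opE: below => [/=]; rewrite tE => -[ef]; subst g => below.
  have /choice [ss' approx_ss] : forall i : 'I_(ar f), exists s, finite_below s (subtree t i) /\
      ale (eval v (ss i)) (eval w s).
    move=> i; move: (below i); rewrite (subst_subtree _ _ tE) => /IH [s ? ?].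
    by exists s.
  exists (TOp ss'); first by apply/below_opE; split=> // i; case: (approx_ss i).
  by apply: aop_mono => i; case: (approx_ss i).
- by move/below_opE: below => [/=]; rewrite tE.
Qed.

(* [P] marks the coterms at which the operations are known to preserve suprema;
   for a Delta-algebra these are the Delta-coterms. *)
Lemma is_lub_approx_subst A Y Z (v : Z -> A) (sg : Y -> tree S Z) (w : Y -> A)
    (P : tree S Z -> Prop) :
  (forall f (ts : 'I_(ar f) -> tree S Z) s, (forall i, P (ts i)) ->
     (forall i, is_lub ale (approx v (ts i)) (s i)) ->
     is_lub ale (op_set (fun i => approx v (ts i))) (aop f s)) ->
  (forall y, is_lub ale (approx v (sg y)) (w y)) ->
  (forall s, P (subst_tree sg (term_tree s))) ->
  forall t c, is_lub ale (approx v (subst_tree sg t)) c <-> is_lub ale (approx w t) c.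
Proof.
move=> op_lub lub_w P_subst.
have lub_term s : is_lub ale (approx v (subst_tree sg (term_tree s))) (eval w s).
  elim: s => [|y|f ss IH] /=; first by rewrite subst_tree_bot; apply: is_lub_approx_bot.
    by rewrite subst_tree_var.
  by rewrite subst_tree_op; apply/is_lub_approx_op/op_lub.
have ub_w y b : approx v (sg y) b -> ale b (w y) by case: (lub_w y) => ub _; apply: ub.
move=> t c.
suff sameub c' : (forall b, approx v (subst_tree sg t) b -> ale b c') <->
                 (forall b, approx w t b -> ale b c').
  by split; apply: is_lub_same_ub => c''; rewrite sameub.
split=> ubc b => [[s [below ->]]|[s' [below ->]]].
  have [_ least] := lub_term s; apply: least => _ [s' [below' ->]]; apply: ubc.
  by exists s'; split=> //; apply: tree_le_trans below' (subst_tree_mono (sg := sg) below).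
have [s below_s le_s] := approx_subst_below ub_w below.
by apply: ale_trans le_s _; apply: ubc; exists s.
Qed.

Lemma quasi_regular_relabel (Delta : tfamily S) Y Z (h : Y -> Z) t :
  quasi_regular Delta -> Delta Y t -> Delta Z (relabel h t).
Proof.
move=> qrDelta; apply: quasi_regular_subst => // y.
by case: qrDelta => [_ [_ [Delta_var _]]]; apply: Delta_var.
Qed.

Lemma approx_morph A (B : ordAlg S) (g : A -> B) (T : tree S A) b : ord_morph g ->
  (exists a, delta_set T a /\ b = g a) <-> approx g T b.
Proof.
move=> g_morph; split=> [[_ [[s [below ->]] ->]]|[s [below ->]]].
  by exists s; split=> //; rewrite (eval_morph _ _ g_morph).
by exists (eval (fun b => b) s); split; [exists s|rewrite (eval_morph _ _ g_morph)].
Qed.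

End Substitution.

Section IdealCompletion.
Variables (S : signature) (F : ordAlg S).

Record ideal := Ideal {
  ival :> F -> Prop;
  ideal_directed : directed ale ival;
  ideal_down : forall c d, ale c d -> ival d -> ival c }.

Lemma ideal_inhabited (I : ideal) : exists c, I c.
Proof. exact: (proj1 (ideal_directed I)). Qed.

Lemma ideal_ext (I J : ideal) : (forall c, I c <-> J c) -> I = J.
Proof.
case: I J => [P1 dir1 down1] [P2 dir2 down2] /= PE.
have E : P1 = P2.
  by apply: functional_extensionality => c; apply: propositional_extensionality.
by subst P2; f_equal; apply: proof_irrelevance.
Qed.

Definition principal (b : F) : ideal.
refine (@Ideal (fun c => ale c b) _ _); last by move=> c d; apply: ale_trans.
split=> [|c d lecb ledb]; first by exists b; apply: ale_refl.
by exists b; split; [apply: ale_refl|split].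
Defined.

Definition ideal_op (f : sym S) (U : 'I_(ar f) -> ideal) : ideal.
refine (@Ideal (fun c => exists w, (forall i, U i (w i)) /\ ale c (aop f w)) _ _); last first.
  by move=> c d le_cd [w [Uw le_dw]]; exists w; split=> //; apply: ale_trans le_dw.
split.
  have /choice [w Uw] : forall i, exists c, U i c by move=> i; apply: ideal_inhabited.
  by exists (aop f w), w; split=> //; apply: ale_refl.
move=> a b [w1 [Uw1 le_a]] [w2 [Uw2 le_b]].
have /choice [w Uw] : forall i, exists c, U i c /\ ale (w1 i) c /\ ale (w2 i) c.
  by move=> i; apply: (proj2 (ideal_directed (U i))).
exists (aop f w); split; first by exists w; split=> [i|]; [case: (Uw i)|apply: ale_refl].
by split; [apply: ale_trans le_a _|apply: ale_trans le_b _]; apply: aop_mono => i;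
  case: (Uw i) => _ [].
Defined.

Definition ideal_alg : ordAlg S.
refine (@OrdAlg S ideal (fun I J => forall c, I c -> J c) (principal (abot F)) ideal_op
  _ _ _ _ _).
- by [].
- by move=> I J K IJ JK c /IJ /JK.
- by move=> I J IJ JI; apply: ideal_ext => c; split; [apply: IJ|apply: JI].
- move=> I c /= le_c_bot; have [d Id] := ideal_inhabited I.
  by apply: ideal_down Id; apply: ale_trans le_c_bot (abot_least _ _ _).
- move=> f U V UV c [w [Uw le_c]]; exists w; split=> // i; exact/UV/Uw.
Defined.

Definition ideal_union (D : ideal_alg -> Prop) (dirD : directed ale D) : ideal_alg.
refine (@Ideal (fun c => exists2 I : ideal_alg, D I & I c) _ _); last first.
  by move=> c d le_cd [I DI Id]; exists I => //; apply: ideal_down Id.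
case: dirD => [[I DI] dirD]; split.
  by have [c Ic] := ideal_inhabited I; exists c, I.
move=> a b [I1 DI1 I1a] [I2 DI2 I2b].
have [J [DJ [I1J I2J]]] := dirD I1 I2 DI1 DI2.
have [c [Jc lec]] := proj2 (ideal_directed J) a b (I1J a I1a) (I2J b I2b).
by exists c; split=> //; exists J.
Defined.

Lemma is_lub_ideal_union (D : ideal_alg -> Prop) (dirD : directed ale D) :
  is_lub ale D (ideal_union dirD).
Proof. by split=> [I DI c Ic|J ubJ c [I DI Ic]]; [exists I|apply: ubJ DI c Ic]. Qed.

Lemma ideal_directed_lubP (D : ideal_alg -> Prop) (a : ideal_alg) c :
  directed ale D -> is_lub ale D a -> a c -> exists2 I : ideal_alg, D I & I c.
Proof.
by move=> dirD lub_a; rewrite (is_lub_unique lub_a (is_lub_ideal_union dirD)).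
Qed.

Lemma ideal_alg_omega_cont : omega_cont ideal_alg.
Proof.
split=> [D _ dirD|f D s _ dirD lub_s].
  by exists (ideal_union dirD); apply: is_lub_ideal_union.
split=> [_ [u [Du ->]]|J ubJ c [w [sw le_c]]].
  by apply: aop_mono => i; apply: (proj1 (lub_s i)); exists u.
have dir_proj i : directed ale (fun a => exists u, D u /\ a = u i).
  case: dirD => [[u0 Du0] dirD]; split; first by exists (u0 i), u0.
  move=> _ _ [u1 [Du1 ->]] [u2 [Du2 ->]]; have [u [Du [le1 le2]]] := dirD u1 u2 Du1 Du2.
  by exists (u i); split; [exists u|split].
have /choice [U DU] : forall i, exists u, D u /\ u i (w i).
  move=> i; have [_ [u [Du ->]] uw] := ideal_directed_lubP (dir_proj i) (lub_s i) (sw i).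
  by exists u.
have [u [Du leUu]] := directed_fin_ub (w := U)
  (fun a b c ab bc i => ale_trans _ _ _ _ _ (ab i) (bc i))
  dirD (fun i => proj1 (DU i)).
apply: (ubJ (aop f u)); first by exists u.
by exists w; split=> // i; apply: (leUu i i); case: (DU i).
Qed.

Lemma eval_ideal_alg Y (v : Y -> ideal_alg) s c :
  eval v s c <-> exists w : Y -> F, (forall y, v y (w y)) /\ ale c (eval w s).
Proof.
split; last first.
  move=> [w [vw le_c]]; apply: ideal_down le_c _.
  elim: s => [|y|f ss IH] /=; [exact: ale_refl|exact: vw|].
  by exists (fun i => eval w (ss i)); split=> //; apply: ale_refl.
elim: s c => [|y|f ss IH] c /=.
- have /choice [w vw] : forall y, exists c, v y c by move=> y; apply: ideal_inhabited.
  by exists w.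
- move=> vyc; have /choice [w vw] : forall y', exists b, v y' b /\ (y' = y -> ale c b).
    move=> y'; have [->|ne] := classic (y' = y); first by exists c; split=> // _; apply: ale_refl.
    by have [b vb] := ideal_inhabited (v y'); exists b.
  by exists w; split=> [y'|]; [case: (vw y')|apply: (proj2 (vw y))].
move=> [u [IHu le_c]].
have /choice [W vW] : forall i, exists w : Y -> F,
    (forall y, v y (w y)) /\ ale (u i) (eval w (ss i)) by move=> i; apply/IH/IHu.
have /choice [w vw] : forall y, exists b, v y b /\ forall i, ale (W i y) b.
  by move=> y; apply: (directed_fin_ub (@ale_trans _ F) (ideal_directed (v y))) => i; case: (vW i).
exists w; split=> [y|]; first by case: (vw y).
apply: ale_trans le_c _; apply: aop_mono => i; apply: ale_trans (proj2 (vW i)) _.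
by apply: eval_mono => y; case: (vw y) => _; apply.
Qed.

Lemma ideal_alg_sat (E : ineqs S) : sat E F -> sat E ideal_alg.
Proof.
move=> satF t t' Ett' v c /eval_ideal_alg [w [vw le_c]]; apply/eval_ideal_alg.
by exists w; split=> //; apply: ale_trans le_c (satF t t' Ett' w).
Qed.

End IdealCompletion.

Section Compactness.
Variables (S : signature) (E : ineqs S) (X : Type).
Variables (Fw : ordAlg S) (etaw : X -> Fw) (F : ordAlg S) (eta : X -> F).
Hypotheses (free_Fw : free_omega E etaw) (satF : sat E F).

(* The extension of [x |-> principal (eta x)] to an omega-continuous morphism
   sends the value of [t] to the ideal generated by its finite approximations. *)
Lemma ideal_of_ct_eval : exists g : Fw -> ideal_alg F, ord_morph g /\
  forall t a, ct_eval etaw t a ->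
    forall c, g a c <-> exists s, finite_below s t /\ ale c (eval eta s).
Proof.
have [_ [_ univ]] := free_Fw.
have [g [[g_morph g_sup] [g_eta _]]] := univ (ideal_alg F) (ideal_alg_omega_cont F)
  (ideal_alg_sat satF) (fun x => principal (eta x)).
have [_ [g_mono _]] := g_morph.
have g_eval s c : g (eval etaw s) c <-> ale c (eval eta s).
  rewrite (eval_morph _ _ g_morph); split=> [/eval_ideal_alg [w [etaw_w le_c]]|le_c].
    by apply: ale_trans le_c _; apply: eval_mono => y; move: (etaw_w y); rewrite g_eta.
  by apply/eval_ideal_alg; exists eta; split=> // y; rewrite g_eta; apply: ale_refl.
exists g; split=> // t a lub_a c; split=> [gac|[s [below le_c]]]; last first.
  by apply: (g_mono (eval etaw s)); [apply: (proj1 lub_a); exists s|apply/g_eval].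
have lub_trunc := proj1 (is_lub_approx_truncations _ _ _) lub_a.
have dir_g : directed ale (fun b => exists a', truncations etaw t a' /\ b = g a').
  have [[b0 Tb0] dirT] := truncations_directed etaw t.
  split=> [|_ _ [a1 [T1 ->]] [a2 [T2 ->]]]; first by exists (g b0), b0.
  have [b [Tb [le1 le2]]] := dirT a1 a2 T1 T2.
  by exists (g b); split; [exists b|split; apply: g_mono].
have [_ [_ [[k ->] ->]] /g_eval le_c] := ideal_directed_lubP dir_g
  (g_sup _ (truncations_countable etaw t) (truncations_directed etaw t) a lub_trunc) gac.
by exists (truncate k t); split; first exact: truncate_below.
Qed.

Lemma ct_eval_compact t1 t2 a1 a2 :
  ct_eval etaw t1 a1 -> ct_eval etaw t2 a2 -> ale a1 a2 ->
  forall s1, finite_below s1 t1 ->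
  exists2 s2, finite_below s2 t2 & ale (eval eta s1) (eval eta s2).
Proof.
move=> lub1 lub2 le12 s1 below1; have [g [[_ [g_mono _]] g_ct]] := ideal_of_ct_eval.
have : g a1 (eval eta s1) by apply/(g_ct _ _ lub1); exists s1; split=> //; apply: ale_refl.
by move=> /(g_mono _ _ le12) /(g_ct _ _ lub2) [s2 [? ?]]; exists s2.
Qed.

End Compactness.

Section Generation.
Variables (S : signature) (E : ineqs S) (X : Type) (F : ordAlg S) (eta : X -> F).
Hypothesis free_F : free_ord E eta.

Definition term_value := {b : F | exists r, b = eval eta r}.

Lemma term_value_op_closed f (u : 'I_(ar f) -> term_value) :
  exists r, aop f (fun i => sval (u i)) = eval eta r.
Proof.
have /choice [r ur] : forall i, exists r, sval (u i) = eval eta r by move=> i; case: (u i).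
by exists (TOp r) => /=; congr aop; apply: functional_extensionality.
Qed.

Definition term_value_alg : ordAlg S.
refine (@OrdAlg S term_value (fun a b => ale (sval a) (sval b))
  (exist _ (abot F) (ex_intro _ (TBot S X) erefl))
  (fun f u => exist _ (aop f (fun i => sval (u i))) (term_value_op_closed u)) _ _ _ _ _).
- by move=> a; apply: ale_refl.
- by move=> a b c; apply: ale_trans.
- move=> [a ra] [b rb] /= le_ab le_ba; have E0 : a = b by apply: ale_antisym.
  by subst b; f_equal; apply: proof_irrelevance.
- by move=> a; apply: abot_least.
- by move=> f u v le_uv; apply: aop_mono.
Defined.

(* Both the identity and the extension of [eta] into [term_value_alg], followed by
   the inclusion, extend [eta]; by freeness they coincide. *)
Lemma free_ord_generated (b : F) : exists r, b = eval eta r.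
Proof.
have [satF univ] := free_F.
have sval_morph : @ord_morph S term_value_alg F sval by split=> //; split.
have sat_values : sat E term_value_alg.
  by move=> t t' Ett' v /=; rewrite !(eval_morph _ _ sval_morph); apply: satF.
have [g [[g_bot [g_mono g_op]] [g_eta _]]] :=
  univ term_value_alg sat_values (fun x => exist _ (eta x) (ex_intro _ (TVar S x) erefl)).
have [extF [_ [_ extF_unique]]] := univ F satF eta.
have sval_g : ord_morph (fun b => sval (g b)).
  by split=> [|]; [rewrite g_bot|split=> [a a' /g_mono //|f u]; rewrite g_op].
have id_morph : ord_morph (fun b : F => b) by [].
have -> : b = sval (g b).
  exact: etrans (extF_unique _ id_morph (fun=> erefl) b)
                (esym (extF_unique _ sval_g (fun x => congr1 sval (g_eta x)) b)).
by case: (g b).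
Qed.

Lemma free_ord_eval_mono (B : ordAlg S) (h : X -> B) s1 s2 : sat E B ->
  ale (eval eta s1) (eval eta s2) -> ale (eval h s1) (eval h s2).
Proof.
move=> satB le_s; have [k [k_morph [k_eta _]]] := proj2 free_F B satB h.
have k_eval s : k (eval eta s) = eval h s.
  by rewrite (eval_morph _ _ k_morph); congr eval; apply: functional_extensionality.
by rewrite -!k_eval; case: k_morph => _ [k_mono _]; apply: k_mono.
Qed.

End Generation.

Section DeltaAlgebra.
Unset Implicit Arguments.
Variables (S : signature) (Delta : tfamily S) (B : ordAlg S).
Set Implicit Arguments.
Hypotheses (qrDelta : quasi_regular Delta) (deltaB : delta_alg Delta B).

Lemma delta_set_relabel X (h : X -> B) t b :
  delta_set (relabel h t) b <-> approx h t b.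
Proof. exact: (approx_relabel h (fun b : B => b)). Qed.

Lemma delta_alg_approx_lub X (h : X -> B) t :
  Delta X t -> exists b, is_lub ale (approx h t) b.
Proof.
move=> Delta_t; have [b lub_b] := proj1 deltaB _ (quasi_regular_relabel h qrDelta Delta_t).
by exists b; apply: is_lub_eq lub_b => b'; apply: delta_set_relabel.
Qed.

Lemma delta_alg_approx_op X (h : X -> B) f (ts : 'I_(ar f) -> tree S X) s :
  (forall i, Delta X (ts i)) -> (forall i, is_lub ale (approx h (ts i)) (s i)) ->
  is_lub ale (op_set (fun i => approx h (ts i))) (aop f s).
Proof.
move=> Delta_ts lub_s.
have lub_s' i : is_lub ale (delta_set (relabel h (ts i))) (s i).
  by apply: is_lub_eq (lub_s i) => b; rewrite delta_set_relabel.
have Delta_ts' i := quasi_regular_relabel h qrDelta (Delta_ts i).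
apply: is_lub_eq (proj2 deltaB f _ s Delta_ts' lub_s').
by move=> b; split=> -[u [approx_u ->]]; exists u; split=> // i; apply/delta_set_relabel/approx_u.
Qed.

End DeltaAlgebra.

Section RegularAlgebra.
Unset Implicit Arguments.
Variables (S : signature) (E : ineqs S) (Delta : tfamily S) (X : Type).
Variables (Fw : ordAlg S) (etaw : X -> Fw) (F : ordAlg S) (eta : X -> F).
Set Implicit Arguments.
Hypotheses (qrDelta : quasi_regular Delta) (free_Fw : free_omega E etaw)
  (free_F : free_ord E eta).

Let omega_Fw : omega_cont Fw := proj1 free_Fw.

Lemma ct_eval_op f (ts : 'I_(ar f) -> tree S X) s :
  (forall i, ct_eval etaw (ts i) (s i)) -> ct_eval etaw (tree_op ts) (aop f s).
Proof. by move=> lub_s; apply/is_lub_approx_op; apply: omega_cont_approx_op omega_Fw lub_s. Qed.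

Definition regular := {c : Fw | exists t, Delta X t /\ ct_eval etaw t c}.

Lemma regular_op_closed f (u : 'I_(ar f) -> regular) :
  exists t, Delta X t /\ ct_eval etaw t (aop f (fun i => sval (u i))).
Proof.
have /choice [ts Delta_ts] : forall i, exists t, Delta X t /\ ct_eval etaw t (sval (u i)).
  by move=> i; case: (u i).
exists (tree_op ts); split; last by apply: ct_eval_op => i; case: (Delta_ts i).
by case: qrDelta => [_ [_ [_ [Delta_op _]]]]; apply: Delta_op => i; case: (Delta_ts i).
Qed.

Lemma regular_bot_closed : exists t, Delta X t /\ ct_eval etaw t (abot Fw).
Proof.
by exists (tree_bot S X); split; [case: qrDelta => _ []|apply: is_lub_approx_bot].
Qed.

Lemma regular_inj (a b : regular) : sval a = sval b -> a = b.
Proof. by case: a b => [a ?] [b ?] /= ab; subst b; f_equal; apply: proof_irrelevance. Qed.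

Definition regular_alg : ordAlg S.
refine (@OrdAlg S regular (fun a b => ale (sval a) (sval b))
  (exist _ (abot Fw) regular_bot_closed)
  (fun f u => exist _ (aop f (fun i => sval (u i))) (regular_op_closed u)) _ _ _ _ _).
- by move=> a; apply: ale_refl.
- by move=> a b c; apply: ale_trans.
- by move=> a b le_ab le_ba; apply/regular_inj/ale_antisym.
- by move=> a; apply: abot_least.
- by move=> f u v le_uv; apply: aop_mono.
Defined.

Definition regular_val (a : regular_alg) : Fw := sval a.

Definition regular_tree (a : regular_alg) : tree S X :=
  sval (constructive_indefinite_description _ (svalP a)).

Lemma regular_treeP a : Delta X (regular_tree a) /\ ct_eval etaw (regular_tree a) (regular_val a).
Proof. exact: svalP (constructive_indefinite_description _ (svalP a)). Qed.

Lemma regular_var_closed x : exists t, Delta X t /\ ct_eval etaw t (etaw x).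
Proof.
by exists (tree_var S x); split; [case: qrDelta => _ [_ []]|apply: is_lub_approx_var].
Qed.

Definition regular_gen (x : X) : regular_alg := exist _ (etaw x) (regular_var_closed x).

Lemma regular_val_morph : ord_morph regular_val.
Proof. by split=> //; split. Qed.

Lemma is_lub_regular_val (P : regular_alg -> Prop) a :
  is_lub ale (fun b => exists a', P a' /\ b = regular_val a') (regular_val a) ->
  is_lub ale P a.
Proof.
move=> [ub least]; split=> [b Pb|c ubc]; first by apply: ub; exists b.
by apply: least => _ [a' [Pa' ->]]; apply: ubc.
Qed.

Lemma eval_regular_val Y (v : Y -> regular_alg) s :
  regular_val (eval v s) = eval (fun y => regular_val (v y)) s.
Proof. exact: eval_morph regular_val_morph. Qed.

Lemma Delta_regular_tree a : Delta X (regular_tree a).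
Proof. exact: (proj1 (regular_treeP a)). Qed.

Lemma ct_eval_regular_tree a : ct_eval etaw (regular_tree a) (regular_val a).
Proof. exact: (proj2 (regular_treeP a)). Qed.

Lemma is_lub_approx_flatten (T : tree S regular_alg) c :
  is_lub ale (approx etaw (subst_tree regular_tree T)) c <->
  is_lub ale (approx regular_val T) c.
Proof.
apply: (is_lub_approx_subst (P := fun=> True)) => //.
  by move=> f ts s _; apply: omega_cont_approx_op omega_Fw.
exact: ct_eval_regular_tree.
Qed.

Lemma regular_delta_lub (T : tree S regular_alg) : Delta regular_alg T ->
  exists a, is_lub ale (delta_set T) a /\ ct_eval etaw (subst_tree regular_tree T) (regular_val a).
Proof.
move=> Delta_T; have [c lub_c] := omega_cont_approx_lub etaw (subst_tree regular_tree T) omega_Fw.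
have Delta_flat : Delta X (subst_tree regular_tree T).
  by apply: quasi_regular_subst Delta_T => // a; apply: Delta_regular_tree.
exists (exist _ c (ex_intro _ _ (conj Delta_flat lub_c))); split=> //.
apply: is_lub_regular_val; apply: is_lub_eq (proj1 (is_lub_approx_flatten T c) lub_c).
by move=> b; rewrite (approx_morph _ _ regular_val_morph).
Qed.

Lemma regular_delta_lubE (T : tree S regular_alg) a : Delta regular_alg T ->
  is_lub ale (delta_set T) a -> ct_eval etaw (subst_tree regular_tree T) (regular_val a).
Proof.
by move=> /regular_delta_lub [a' [lub_a' flat_a']] lub_a; rewrite (is_lub_unique lub_a lub_a').
Qed.

Lemma regular_delta_alg : delta_alg Delta regular_alg.
Proof.
split=> [T /regular_delta_lub [a [lub_a _]]|f ts s Delta_ts lub_s]; first by exists a.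
have Delta_op : Delta regular_alg (tree_op ts).
  by case: qrDelta => [_ [_ [_ [Delta_op _]]]]; apply: Delta_op.
have [a [_ flat_a]] := regular_delta_lub Delta_op.
have val_a : regular_val a = aop f (fun i => regular_val (s i)).
  apply: is_lub_unique flat_a _; rewrite subst_tree_op; apply: ct_eval_op => i.
  exact: regular_delta_lubE.
apply: is_lub_regular_val; have -> : regular_val (aop f s) = regular_val a by rewrite val_a.
move/is_lub_approx_flatten/is_lub_approx_op: flat_a; apply: is_lub_eq => b.
split=> [[u [approx_u ->]]|[_ [[u [Tu ->]] ->]]]; last first.
  exists (fun i => regular_val (u i)); split=> // i.
  by apply/(approx_morph _ _ regular_val_morph); exists (u i).
have /choice [w Tw] : forall i, exists a, delta_set (ts i) a /\ u i = regular_val a.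
  by move=> i; apply/(approx_morph _ _ regular_val_morph).
exists (aop f w); split; first by exists w; split=> // i; case: (Tw i).
by rewrite /regular_val /=; congr aop; apply: functional_extensionality => i; case: (Tw i).
Qed.

Lemma regular_sat : sat E regular_alg.
Proof.
move=> t t' Ett' v; rewrite /= -!/(regular_val _) !eval_regular_val.
exact: (proj1 (proj2 free_Fw)).
Qed.

Lemma regular_gen_lub a :
  is_lub ale (delta_set (relabel regular_gen (regular_tree a))) a.
Proof.
apply: is_lub_regular_val; apply: is_lub_eq (ct_eval_regular_tree a) => b.
by rewrite (approx_morph _ _ regular_val_morph) approx_relabel.
Qed.

Section UniversalProperty.
Variables (B : ordAlg S) (h : X -> B).
Hypotheses (deltaB : delta_alg Delta B) (satB : sat E B).

Lemma approx_lub_mono t1 t2 a1 a2 b1 b2 :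
  ct_eval etaw t1 a1 -> ct_eval etaw t2 a2 -> ale a1 a2 ->
  is_lub ale (approx h t1) b1 -> is_lub ale (approx h t2) b2 -> ale b1 b2.
Proof.
move=> lub1 lub2 le12 [_ least1] [ub2 _]; apply: least1 => _ [s [below ->]].
have [s2 below2 le_s] := ct_eval_compact eta free_Fw (proj1 free_F) lub1 lub2 le12 below.
apply: ale_trans (ub2 (eval h s2) _); last by exists s2.
exact (free_ord_eval_mono free_F h satB le_s).
Qed.

Definition regular_lift (a : regular_alg) : B :=
  sval (constructive_indefinite_description _
    (delta_alg_approx_lub qrDelta deltaB h (Delta_regular_tree a))).

Lemma regular_liftP a : is_lub ale (approx h (regular_tree a)) (regular_lift a).
Proof. exact: svalP. Qed.

Lemma regular_liftE t a : Delta X t -> ct_eval etaw t (regular_val a) ->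
  is_lub ale (approx h t) (regular_lift a).
Proof.
move=> Delta_t lub_a; have [b lub_b] := delta_alg_approx_lub qrDelta deltaB h Delta_t.
suff -> : regular_lift a = b by [].
have lub_ra := ct_eval_regular_tree a.
apply: ale_antisym.
  exact: approx_lub_mono lub_ra lub_a (ale_refl _ _ _) (regular_liftP a) lub_b.
exact: approx_lub_mono lub_a lub_ra (ale_refl _ _ _) lub_b (regular_liftP a).
Qed.

Lemma regular_lift_morph : ord_morph regular_lift.
Proof.
have [_ [Delta_bot [_ [Delta_op _]]]] := qrDelta.
split; last split.
- by apply: is_lub_unique (regular_liftE (Delta_bot X) _) _; apply: is_lub_approx_bot.
- move=> a b le_ab; apply: approx_lub_mono (ct_eval_regular_tree a) (ct_eval_regular_tree b)
    le_ab (regular_liftP a) (regular_liftP b).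
move=> f u; pose ts i := regular_tree (u i).
have ct_op : ct_eval etaw (tree_op ts) (regular_val (aop f u)).
  by apply: ct_eval_op => i; apply: ct_eval_regular_tree.
have := regular_liftE (Delta_op _ _ _ (fun i => Delta_regular_tree (u i))) ct_op.
move/is_lub_approx_op/is_lub_unique; apply.
by apply: (delta_alg_approx_op qrDelta deltaB) => i;
  [apply: Delta_regular_tree|apply: regular_liftP].
Qed.

Lemma regular_lift_gen x : regular_lift (regular_gen x) = h x.
Proof.
have Delta_x : Delta X (tree_var S x) by case: qrDelta => _ [_ []].
by apply: is_lub_unique (regular_liftE Delta_x _) _; apply: is_lub_approx_var.
Qed.

Lemma regular_lift_delta_morph : delta_morph Delta regular_lift.
Proof.
split=> [|T Delta_T a lub_a]; first exact: regular_lift_morph.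
have Delta_flat : Delta X (subst_tree regular_tree T).
  by apply: quasi_regular_subst Delta_T => // a'; apply: Delta_regular_tree.
have Delta_subst s : Delta X (subst_tree regular_tree (term_tree s)).
  apply: quasi_regular_subst (quasi_regular_term _ qrDelta) => // a'.
  exact: Delta_regular_tree.
have := regular_liftE Delta_flat (regular_delta_lubE Delta_T lub_a).
move/(is_lub_approx_subst (@delta_alg_approx_op _ _ _ qrDelta deltaB X h) regular_liftP
  Delta_subst).
by apply: is_lub_eq => b; rewrite (approx_morph _ _ regular_lift_morph).
Qed.

Lemma regular_lift_unique (g : regular_alg -> B) : delta_morph Delta g ->
  (forall x, g (regular_gen x) = h x) -> forall a, g a = regular_lift a.
Proof.
move=> [g_morph g_lub] g_gen a.
have Delta_T := quasi_regular_relabel regular_gen qrDelta (Delta_regular_tree a).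
apply: is_lub_unique (g_lub _ Delta_T a (regular_gen_lub a)) _.
apply: is_lub_eq (regular_liftP a) => b.
rewrite (approx_morph _ _ g_morph) approx_relabel.
by have -> : (fun x => g (regular_gen x)) = h by apply: functional_extensionality.
Qed.

End UniversalProperty.

Definition regular_ideal (a : regular_alg) (c : F) : Prop :=
  exists s, finite_below s (regular_tree a) /\ ale c (eval eta s).

Lemma regular_idealE t a c : ct_eval etaw t (regular_val a) ->
  regular_ideal a c <-> exists b, approx eta t b /\ ale c b.
Proof.
move=> lub_t; have lub_a := ct_eval_regular_tree a.
have compact := ct_eval_compact eta free_Fw (proj1 free_F).
split=> [[s [below le_c]]|[_ [[s [below ->]] le_c]]].
  have [s2 below2 le_s] := compact _ _ _ _ lub_a lub_t (ale_refl _ _ _) s below.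
  by exists (eval eta s2); split; [exists s2|apply: ale_trans le_c le_s].
have [s2 below2 le_s] := compact _ _ _ _ lub_t lub_a (ale_refl _ _ _) s below.
by exists s2; split=> //; apply: ale_trans le_c le_s.
Qed.

Lemma regular_ideal_delta a : delta_ideal Delta (regular_ideal a).
Proof.
exists (relabel eta (regular_tree a)).
split; first exact (quasi_regular_relabel eta qrDelta (Delta_regular_tree a)).
move=> c; split=> [[s [below le_c]]|[_ [/delta_set_relabel [s [below ->]] le_c]]].
  by exists (eval eta s); split=> //; apply/delta_set_relabel; exists s.
by exists s.
Qed.

(* Every Delta-ideal of [F] comes from a regular element: writing each element of [F]
   as the value of a term, a Delta-coterm over [F] becomes a Delta-coterm over [X]. *)
Lemma regular_ideal_surj C : delta_ideal Delta C ->
  exists a, forall c, regular_ideal a c <-> C c.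
Proof.
move=> [T [Delta_T CE]].
have /choice [r rE] := free_ord_generated free_F.
pose t := subst_tree (fun b => term_tree (r b)) T.
have Delta_t : Delta X t.
  by apply: quasi_regular_subst Delta_T => // b; apply: quasi_regular_term.
have [c0 lub_c0] := omega_cont_approx_lub etaw t omega_Fw.
pose a : regular_alg := exist _ c0 (ex_intro _ t (conj Delta_t lub_c0)).
have lub_a : ct_eval etaw t (regular_val a) := lub_c0.
exists a => c; rewrite (regular_idealE c lub_a) CE.
have r_ub b b' : approx eta (term_tree (r b)) b' -> ale b' b.
  by move=> [s [below ->]]; rewrite (rE b); apply: eval_below.
split=> [[_ [[s [below ->]] le_c]]|[_ [[s [below ->]] le_c]]].
  have [s' below' le_s] := approx_subst_below r_ub below.
  by exists (eval (fun b => b) s'); split; [exists s'|apply: ale_trans le_c le_s].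
exists (eval eta (subst_term r s)); split.
  by exists (subst_term r s); split=> //; apply: below_subst below => b; apply: below_term_tree.
rewrite eval_subst_term.
by have <- : (fun b => b) = (fun b => eval eta (r b)) by apply: functional_extensionality.
Qed.

Lemma regular_ideal_le a b :
  ale a b <-> (forall c, regular_ideal a c -> regular_ideal b c).
Proof.
have lub_a := ct_eval_regular_tree a; have lub_b := ct_eval_regular_tree b.
split=> [le_ab c [s [below le_c]]|sub_ab].
  have [s2 below2 le_s] := ct_eval_compact eta free_Fw (proj1 free_F) lub_a lub_b le_ab below.
  by exists s2; split=> //; apply: ale_trans le_c le_s.
apply: (proj2 lub_a) => _ [s [below ->]].
have [|s2 [below2 le_s]] := sub_ab (eval eta s); first by exists s; split=> //; apply: ale_refl.
apply: ale_trans (proj1 lub_b (eval etaw s2) _); last by exists s2.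
exact (free_ord_eval_mono free_F etaw (proj1 (proj2 free_Fw)) le_s).
Qed.

Lemma regular_ideal_op f (u : 'I_(ar f) -> regular_alg) c :
  regular_ideal (aop f u) c <->
  exists w, (forall i, regular_ideal (u i) (w i)) /\ ale c (aop f w).
Proof.
have lub_op : ct_eval etaw (tree_op (fun i => regular_tree (u i))) (regular_val (aop f u)).
  by apply: ct_eval_op => i; apply: ct_eval_regular_tree.
rewrite (regular_idealE c lub_op).
split=> [[b [/approx_opE [->|[w [approx_w ->]]] le_c]]|[w [uw le_c]]].
- exists (fun=> abot F); split; last by apply: ale_trans le_c (abot_least _ _ _).
  by move=> i; exists (TBot S X); split; [apply: below_bot|apply: ale_refl].
- exists w; split=> // i; have [s [below ->]] := approx_w i.
  by exists s; split=> //; apply: ale_refl.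
have /choice [ss uss] : forall i, exists s,
    finite_below s (regular_tree (u i)) /\ ale (w i) (eval eta s) by [].
exists (aop f (fun i => eval eta (ss i))); split.
  apply/approx_opE; right; exists (fun i => eval eta (ss i)); split=> // i.
  by exists (ss i); split=> //; case: (uss i).
by apply: ale_trans le_c _; apply: aop_mono => i; case: (uss i).
Qed.

Lemma regular_ideal_gen x c : regular_ideal (regular_gen x) c <-> ale c (eta x).
Proof.
have lub_x : ct_eval etaw (tree_var S x) (regular_val (regular_gen x)).
  exact: is_lub_approx_var.
rewrite (regular_idealE c lub_x).
split=> [[b [/approx_varE [->|->] le_c]]|le_c] //.
  by apply: ale_trans le_c (abot_least _ _ _).
by exists (eta x); split=> //; apply/approx_varE; right.
Qed.

End RegularAlgebra.

Theorem mainTheorem3 (S : signature) (E : ineqs S) (Delta : tfamily S) (X : Type)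
  (Fw : ordAlg S) (etaw : X -> Fw) (F : ordAlg S) (eta : X -> F) :
  quasi_regular Delta -> free_omega E etaw -> free_ord E eta ->
  exists (RA : ordAlg S) (iota : RA -> Fw) (gen : X -> RA),
    (* RA is R(X) with the order and operations inherited from F_omega(X) *)
    (forall a b, iota a = iota b -> a = b) /\
    (forall a b, ale a b <-> ale (iota a) (iota b)) /\
    iota (abot RA) = abot Fw /\
    (forall f u, iota (aop f u) = aop f (fun i => iota (u i))) /\
    (forall c : Fw, (exists a, iota a = c) <->
                    (exists t, Delta X t /\ ct_eval etaw t c)) /\
    (forall x, iota (gen x) = etaw x) /\
    (* (1) R(X) is a Delta-algebra in V_r, free on X *)
    delta_alg Delta RA /\ sat E RA /\
    (forall B : ordAlg S, delta_alg Delta B -> sat E B -> forall h : X -> B,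
       exists g : RA -> B, delta_morph Delta g /\ (forall x, g (gen x) = h x) /\
         (forall g' : RA -> B, delta_morph Delta g' -> (forall x, g' (gen x) = h x) ->
            forall a, g' a = g a)) /\
    (* (2) R(X) is isomorphic, fixing X, to the completion of F(X) by Delta-ideals *)
    (exists phi : RA -> (F -> Prop),
       (forall a, delta_ideal Delta (phi a)) /\
       (forall C, delta_ideal Delta C -> exists a, forall c, phi a c <-> C c) /\
       (forall a b, ale a b <-> (forall c, phi a c -> phi b c)) /\
       (forall f u c, phi (aop f u) c <->
          exists w, (forall i, phi (u i) (w i)) /\ ale c (aop f w)) /\
       (forall x c, phi (gen x) c <-> ale c (eta x))).
Proof.
move=> qrDelta free_Fw free_F.
exists (regular_alg qrDelta free_Fw), (fun a => regular_val a), (regular_gen qrDelta free_Fw).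
split; first exact: regular_inj.
do 3!split=> //.
split.
  move=> c; split=> [[a <-]|[t [Delta_t lub_c]]]; first exact: (svalP a).
  by exists (exist _ c (ex_intro _ t (conj Delta_t lub_c))).
split=> //.
split; first exact: regular_delta_alg.
split; first exact: regular_sat.
split.
  move=> B deltaB satB h; exists (regular_lift h deltaB).
  split; first exact: (regular_lift_delta_morph qrDelta free_Fw free_F).
  split; first exact: (regular_lift_gen qrDelta free_Fw free_F).
  exact: (regular_lift_unique deltaB).
exists (regular_ideal eta (qrDelta := qrDelta) (free_Fw := free_Fw)).
split; first exact: regular_ideal_delta.
split; first exact: (regular_ideal_surj qrDelta free_Fw free_F).
split; first exact: (regular_ideal_le free_F).
split; first exact: (regular_ideal_op free_F).
exact: (regular_ideal_gen qrDelta free_Fw free_F).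
Qed.
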